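(* Let $\mathfrak L=\mathbb V\oplus\mathbb W$ be a color gLt-algebra admitting a quasi-multiplicative basis $\mathfrak B=\{e_i\}_{i\in I}$ of $\mathbb W\neq 0$. For any $i\in I$, the linear subspace $\mathfrak J_{[i]}=\mathbb V_{[i]}\oplus\mathbb W_{[i]}$ is a color gLt-ideal of $\mathfrak L$ admitting a quasi-multiplicative basis inherited by the one of $\mathfrak L$.
   Context: Let $\mathbb F$ be a field, $\mathbb G$ an abelian group, $n\ge 2$, and $\epsilon:\mathbb G\times\mathbb G\to\mathbb F\setminus\{0\}$ a bicharacter ($\epsilon(k,g+h)=\epsilon(k,g)\epsilon(k,h)$, $\epsilon(g+h,k)=\epsilon(g,k)\epsilon(h,k)$, $\epsilon(g,h)\epsilon(h,g)=1$). A graded $n$-ary algebra is a $\mathbb G$-graded vector space $\mathfrak L=\bigoplus_{g\in\mathbb G}\mathfrak L_g$ with an $n$-linear map $\langle\cdot,\dots,\cdot\rangle:\mathfrak L^n\to\mathfrak L$ such that $\langle\mathfrak L_{g_1},\dots,\mathfrak L_{g_n}\rangle\subset\mathfrak L_{g_1+\dots+g_n}$. For $\sigma\in\mathbb S_n$ write $\langle x_1,\dots,x_n\rangle_\sigma:=\langle x_{\sigma(1)},\dots,x_{\sigma(n)}\rangle$; for subsets $A_1,\dots,A_n$, $\langle A_1,\dots,A_n\rangle_\sigma$ denotes the linear span of all $\langle x_1,\dots,x_n\rangle_\sigma$ with $x_r\in A_r$. A color gLt-algebra is a graded $n$-ary algebra satisfying, for each $k=1,\dots,n$ and fixed scalars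 $\alpha^{\sigma_1,\sigma_2}_{i,j,k}\in\mathbb F$, the color version (each term on the right multiplied by the product of values of $\epsilon$ on the degrees of the homogeneous arguments transposed in passing from the left-hand order to the order of that term) of the identity $\langle y_1,\dots,y_{k-1},\langle x_1,\dots,x_n\rangle,y_k,\dots,y_{n-1}\rangle=\sum_{1\le i,j\le n,\,\sigma_1\in\mathbb S_n,\,\sigma_2\in\mathbb S_{n-1}}\alpha^{\sigma_1,\sigma_2}_{i,j,k}\langle x_{\sigma_1(1)},\dots,x_{\sigma_1(i-1)},\langle y_{\sigma_2(1)},\dots,y_{\sigma_2(j-1)},x_{\sigma_1(i)},y_{\sigma_2(j)},\dots,y_{\sigma_2(n-1)}\rangle,x_{\sigma_1(i+1)},\dots,x_{\sigma_1(n)}\rangle$. A $\mathbb G$-graded subspace $\mathcal I\subset\mathfrak L$ is a color gLt-ideal if $\langle\mathcal I,\mathfrak L,\dots,\mathfrak L\rangle_\sigma\subset\mathcal I$ for every $\sigma\in\mathbb S_n$. $\mathfrak L$ admits a quasi-multiplicative basis if $\mathfrak L=\mathbb V\oplus\mathbb W$ with $\mathbb V$, $\mathbb W\ne0$ graded subspaces and $\mathfrak B=\{e_i\}_{i\in I}$ a basis of homogeneous elements of $\mathbb W$ such that: (1) for $i_1,\dots,i_n\in I$, either $\langle e_{i_1},\dots,e_{i_n}\rangle\in\mathbb Fe_j$ for some $j\in I$ or $\langle e_{i_1},\dots,e_{i_n}\rangle\in\mathbb V$; (2) for $0<k<n$, $i_1,\dots,i_k\in I$ and $\sigma\in\mathbb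 S_n$, $\langle e_{i_1},\dots,e_{i_k},\mathbb V,\dots,\mathbb V\rangle_\sigma\subset\mathbb Fe_{j_\sigma}$ for some $j_\sigma\in I$; (3) either $\langle\mathbb V,\dots,\mathbb V\rangle\subset\mathbb Fe_j$ for some $j\in I$ or $\langle\mathbb V,\dots,\mathbb V\rangle\subset\mathbb V$. A graded subalgebra (or ideal) $\mathfrak S$ has a quasi-multiplicative basis inherited by the one of $\mathfrak L$ if $\mathfrak S=\mathbb V_{\mathfrak S}\oplus\mathbb W_{\mathfrak S}$ with $\mathbb V_{\mathfrak S}$ a graded subspace of $\mathbb V$ and $0\ne\mathbb W_{\mathfrak S}$ a graded subspace of $\mathbb W$ admitting a subset $\mathfrak B'\subset\mathfrak B$ as a basis. Index maps: let $v$ be a symbol not in $I$, $\mathfrak I:=I\,\dot\cup\,\{v\}$; for each $j\in\mathfrak I$ take a new symbol $\overline j$, $\overline I:=\{\overline i:i\in I\}$, $\overline{\mathfrak I}:=\overline I\,\dot\cup\,\{\overline v\}$; set $\overline{(\overline j)}:=j$, $\overline J:=\{\overline j:j\in J\}$ for a set $J$ of symbols ($\overline\emptyset=\emptyset$). Put $u_j:=e_j$ for $j\in I$ and $u_v:=\mathbb V$. For $\sigma\in\mathbb S_n$ and $(j_1,\dots,j_n)\in\mathfrak I^n$ let $a_\sigma(j_1,\dots,j_n)=\{r\}$ if $r\in I$ and $0\ne\langle u_{j_1},\dots,u_{j_n}\rangle_\sigma\subset\mathbb Fe_r$, $=\{v\}$ if $0\ne\langle u_{j_1},\dots,u_{j_n}\rangle_\sigma\subset\mathbb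 V$, and $=\emptyset$ otherwise. For $j,j_2,\dots,j_n\in\mathfrak I$ let $b_\sigma(j,\overline j_2,\dots,\overline j_n):=\{x\in\mathfrak I: a_\sigma(x,j_2,\dots,j_n)=\{j\}\}$. Define $\mu$ on $(\mathfrak I\,\dot\cup\,\overline{\mathfrak I})\times(\mathfrak I^{n-1}\,\dot\cup\,\overline{\mathfrak I}^{n-1})$ with values subsets of $\mathfrak I$ by: $\mu(j,j_1,\dots,j_{n-1})=\bigcup_{\sigma\in\mathbb S_n}a_\sigma(j,j_1,\dots,j_{n-1})$ for $j,j_1,\dots,j_{n-1}\in\mathfrak I$; $\mu(j,\overline j_1,\dots,\overline j_{n-1})=\bigcup_{\sigma\in\mathbb S_n}b_\sigma(j,\overline j_1,\dots,\overline j_{n-1})$ for $j,j_1,\dots,j_{n-1}\in\mathfrak I$; $\mu(\overline j,j_1,\dots,j_{n-1})=\bigcup_{1\le k\le n-1,\ \sigma\in\mathbb S_n}b_\sigma(j_k,\overline j,\overline j_1,\dots,\overline j_{k-1},\overline j_{k+1},\dots,\overline j_{n-1})$ for $j,j_1,\dots,j_{n-1}\in\mathfrak I$; and $\mu(\overline j,\overline j_1,\dots,\overline j_{n-1})=\emptyset$. Define $\phi$ on pairs $(J,X)$ with $J\subset I\,\dot\cup\,\overline I$ and $X\in\mathfrak I^{n-1}\,\dot\cup\,\overline{\mathfrak I}^{n-1}$ by $\phi(\emptyset,X)=\emptyset$ and, for $J\ne\emptyset$, $\phi(J,X):=K\cup\overline K$ where $K:=\big(\bigcup_{j\in J}\mu(j,X)\big)\setminus\{v\}$.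 Connections: for distinct $i,j\in I$, $i$ is connected to $j$ if there exist $t\ge1$, $X_1,\dots,X_t\in\mathfrak I^{n-1}\,\dot\cup\,\overline{\mathfrak I}^{n-1}$ and $\widetilde i\in\{i,\overline i\}$ such that $\phi(\{\widetilde i\},X_1)\ne\emptyset$, …, $\phi(\cdots\phi(\{\widetilde i\},X_1)\cdots,X_{t-1})\ne\emptyset$, and $j\in\phi(\cdots\phi(\phi(\{\widetilde i\},X_1),X_2)\cdots,X_t)$; every $i$ is connected to itself. Being connected is an equivalence relation $\sim$ on $I$; $[i]$ denotes the class of $i$. Define $\mathbb V_{[i]}:=\big(\sum_{i_1,\dots,i_n\in[i]}\mathbb F\langle e_{i_1},\dots,e_{i_n}\rangle\big)\cap\mathbb V$, $\mathbb W_{[i]}:=\bigoplus_{j\in[i]}\mathbb Fe_j$, and $\mathfrak J_{[i]}:=\mathbb V_{[i]}\oplus\mathbb W_{[i]}$. *)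

From HB Require Import structures.
From mathcomp Require Import all_boot all_fingroup all_algebra.
Set Implicit Arguments. Unset Strict Implicit. Unset Printing Implicit Defensive.
Import GRing.Theory.
Local Open Scope ring_scope.

Definition tup (n : nat) (T : Type) (f : nat -> T) : 'I_n -> T :=
  fun p => f (nat_of_ord p).
Definition extn (T : Type) (m : nat) (d : T) (f : 'I_m -> T) : nat -> T :=
  fun t => if (insub t : option 'I_m) is Some s then f s else d.
Definition insn (T : Type) (k : nat) (z : T) (f : nat -> T) : nat -> T :=
  fun t => if (t < k)%N then f t else if t == k then z else f t.-1.
Definition deln (T : Type) (k : nat) (f : nat -> T) : nat -> T :=
  fun t => if (t < k)%N then f t else f t.+1.
Definition ncons (T : Type) (x : T) (f : nat -> T) : nat -> T :=
  fun t => if t is t'.+1 then f t' else x.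

Section Defs.
Variables (F : fieldType) (G : zmodType) (L : lmodType F).

Definition bicharacter (eps : G -> G -> F) :=
  (forall g h, eps g h != 0) /\
  (forall k g h, eps k (g + h) = eps k g * eps k h) /\
  (forall g h k, eps (g + h) k = eps g k * eps h k) /\
  (forall g h, eps g h * eps h g = 1).

Definition subspace (S : L -> Prop) :=
  S 0 /\ (forall (a : F) x y, S x -> S y -> S (a *: x + y)).

Definition in_span (S : L -> Prop) (x : L) :=
  exists s : seq (F * L), (forall p, p \in s -> S p.2) /\ x = \sum_(p <- s) p.1 *: p.2.

(* Lg g = the homogeneous component L_g; grading: L = (+)_g L_g (direct) *)
Definition grading (Lg : G -> L -> Prop) :=
  (forall g, subspace (Lg g)) /\
  (forall x, exists s : seq (G * L),
       (forall p, p \in s -> Lg p.1 p.2) /\ x = \sum_(p <- s) p.2) /\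
  (forall s : seq (G * L), uniq (map fst s) ->
       (forall p, p \in s -> Lg p.1 p.2) -> \sum_(p <- s) p.2 = 0 ->
       forall p, p \in s -> p.2 = 0).

Definition homogeneous (Lg : G -> L -> Prop) (x : L) := exists g, Lg g x.

Definition graded_subspace (Lg : G -> L -> Prop) (S : L -> Prop) :=
  subspace S /\
  forall x, S x -> exists s : seq (G * L),
     (forall p, p \in s -> Lg p.1 p.2 /\ S p.2) /\ x = \sum_(p <- s) p.2.

Variable n : nat.

Definition multilinear (mu : ('I_n -> L) -> L) :=
  forall (k : 'I_n) (f : 'I_n -> L) (a : F) (u v : L),
    mu (fun p => if p == k then a *: u + v else f p) =
    a *: mu (fun p => if p == k then u else f p) +
    mu (fun p => if p == k then v else f p).

Definition graded_product (Lg : G -> L -> Prop) (mu : ('I_n -> L) -> L) :=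
  forall (g : 'I_n -> G) (x : 'I_n -> L),
    (forall r, Lg (g r) (x r)) -> Lg (\sum_r g r) (mu x).

(* The 2n-1 arguments are tagged
   inl r (= x_{r+1}) and inr s (= y_{s+1}); indices are 0-based, so
   k, i, j : 'I_n stand for the paper's k, i, j minus one.
   posL k a : position of a in the left-hand side
     y_1..y_{k-1}, x_1..x_n, y_k..y_{n-1};
   posT i j s1 s2 a : position of a in the term
     x_{s1(1)}..x_{s1(i-1)}, y_{s2(1)}..y_{s2(j-1)}, x_{s1(i)},
     y_{s2(j)}..y_{s2(n-1)}, x_{s1(i+1)}..x_{s1(n)}.
   The factor is the product of eps(deg a, deg b) over all pairs (a,b)
   with a before b on the left and b before a in the term. *)
Definition posL (k : 'I_n) (a : 'I_n + 'I_(n.-1)) : nat :=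
  match a with
  | inl r => (k + r)%N
  | inr s => if (s < k)%N then nat_of_ord s else (s + n)%N
  end.

Definition posT (i j : 'I_n) (s1 : 'S_n) (s2 : 'S_(n.-1))
    (a : 'I_n + 'I_(n.-1)) : nat :=
  match a with
  | inl r => let q := nat_of_ord ((s1^-1)%g r) in
             if (q < i)%N then q else if q == i then (i + j)%N else (q + n.-1)%N
  | inr s => let q := nat_of_ord ((s2^-1)%g s) in
             if (q < j)%N then (i + q)%N else (i + q).+1
  end.

Definition colfac (eps : G -> G -> F) (dg : 'I_n + 'I_(n.-1) -> G)
    (k i j : 'I_n) (s1 : 'S_n) (s2 : 'S_(n.-1)) : F :=
  \prod_(a : 'I_n + 'I_(n.-1))
    \prod_(b : 'I_n + 'I_(n.-1) |
            (posL k a < posL k b)%N && (posT i j s1 s2 b < posT i j s1 s2 a)%N)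
      eps (dg a) (dg b).

Definition color_gLt_identity (Lg : G -> L -> Prop) (eps : G -> G -> F)
    (mu : ('I_n -> L) -> L)
    (alpha : 'I_n -> 'I_n -> 'I_n -> 'S_n -> 'S_(n.-1) -> F) :=
  forall (k : 'I_n) (gx : 'I_n -> G) (gy : 'I_(n.-1) -> G)
         (x : 'I_n -> L) (y : 'I_(n.-1) -> L),
    (forall r, Lg (gx r) (x r)) -> (forall s, Lg (gy s) (y s)) ->
    let dg a := match a with inl r => gx r | inr s => gy s end in
    mu (tup (insn k (mu x) (extn 0 y))) =
    \sum_(i : 'I_n) \sum_(j : 'I_n) \sum_(s1 : 'S_n) \sum_(s2 : 'S_(n.-1))
      (alpha i j k s1 s2 * colfac eps dg k i j s1 s2) *:
        mu (tup (insn i (mu (tup (insn j (x (s1 i)) (extn 0 (y \o s2)))))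
                          (deln i (extn 0 (x \o s1))))).

Definition color_gLt (Lg : G -> L -> Prop) (eps : G -> G -> F)
    (mu : ('I_n -> L) -> L) :=
  exists alpha, color_gLt_identity Lg eps mu alpha.

Definition prodset (mu : ('I_n -> L) -> L) (A : 'I_n -> L -> Prop) (s : 'S_n) :
    L -> Prop :=
  in_span (fun z => exists x : 'I_n -> L,
                      (forall r, A r (x r)) /\ z = mu (fun p => x (s p))).

Definition gLt_ideal (Lg : G -> L -> Prop) (mu : ('I_n -> L) -> L)
    (S : L -> Prop) :=
  graded_subspace Lg S /\
  forall (s : 'S_n) z,
    prodset mu (fun r => if nat_of_ord r == 0%N then S else (fun _ => True)) s z ->
    S z.

Variable I : eqType.

Definition line (e : I -> L) (j : I) (z : L) := exists c : F, z = c *: e j.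

Definition quasi_mult_basis (Lg : G -> L -> Prop) (mu : ('I_n -> L) -> L)
    (V W : L -> Prop) (e : I -> L) :=
  graded_subspace Lg V /\ graded_subspace Lg W /\
  (forall x, exists v w, V v /\ W w /\ x = v + w) /\
  (forall x, V x -> W x -> x = 0) /\
  (exists x, W x /\ x <> 0) /\
  (forall i, homogeneous Lg (e i)) /\
  (forall x, W x <-> in_span (fun z => exists i, z = e i) x) /\
  (forall s : seq I, uniq s -> forall c : I -> F,
      \sum_(i <- s) c i *: e i = 0 -> forall i, i \in s -> c i = 0) /\
  (forall ix : 'I_n -> I, (exists j, line e j (mu (e \o ix))) \/ V (mu (e \o ix))) /\
  (forall k : nat, (0 < k < n)%N -> forall (ix : 'I_n -> I) (s : 'S_n),
      exists j, forall z,
        prodset mu (fun r => if (r < k)%N then (fun z => z = e (ix r)) else V) s z ->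
        line e j z) /\
  ((exists j, forall z, prodset mu (fun _ => V) 1%g z -> line e j z) \/
   (forall z, prodset mu (fun _ => V) 1%g z -> V z)).

Variables (mu : ('I_n -> L) -> L) (V : L -> Prop) (e : I -> L).

(* the symbol v is None : option I;  u_j *)
Definition uset (j : option I) : L -> Prop :=
  match j with Some i => fun z => z = e i | None => V end.

Definition amap (s : 'S_n) (js : 'I_n -> option I) (t : option I) : Prop :=
  (exists z, prodset mu (fun r => uset (js r)) s z /\ z <> 0) /\
  (forall z, prodset mu (fun r => uset (js r)) s z ->
     match t with Some r => line e r z | None => V z end).

(* x \in b_sigma(j, bar j_2, ..., bar j_n), where rest t = j_{t+2} *)
Definition bset (s : 'S_n) (j : option I) (rest : nat -> option I) (x : option I) :=
  forall t, amap s (tup (ncons x rest)) t <-> t = j.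

(* elements of I-frak \dotcup bar I-frak : (bar?, j) ;
   elements of I-frak^{n-1} \dotcup bar I-frak^{n-1} : (bar?, (j_1..j_{n-1})) *)
Definition Xtype := (bool * ('I_(n.-1) -> option I))%type.

Definition muI (j : bool * option I) (X : Xtype) (x : option I) : Prop :=
  let Xn := extn None X.2 in
  match j.1, X.1 with
  | false, false => exists s, amap s (tup (ncons j.2 Xn)) x
  | false, true => exists s, bset s j.2 Xn x
  | true, false => exists (k : 'I_(n.-1)) s,
                     bset s (X.2 k) (ncons j.2 (deln k Xn)) x
  | true, true => False
  end.

(* phi(J, X) for J \subset I \dotcup bar I, elements (bar?, i) ;
   phi(J,X) = K \cup bar K, K = (\bigcup_{j in J} mu(j,X)) \ {v}
   (this is automatically empty when J is empty) *)
Definition phi (J : bool * I -> Prop) (X : Xtype) : bool * I -> Prop :=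
  fun y => exists j, J j /\ muI (j.1, Some j.2) X (Some y.2).

Definition phis (J : bool * I -> Prop) (Xs : seq Xtype) := foldl phi J Xs.

Definition connected (i j : I) : Prop :=
  i = j \/
  (i <> j /\ exists (b : bool) (Xs : seq Xtype),
     (0 < size Xs)%N /\
     (forall m, (0 < m < size Xs)%N ->
        exists y, phis (fun y => y = (b, i)) (take m Xs) y) /\
     phis (fun y => y = (b, i)) Xs (false, j)).

Definition Vcls (i : I) : L -> Prop :=
  fun x => in_span (fun z => exists ix : 'I_n -> I,
                        (forall r, connected i (ix r)) /\ z = mu (e \o ix)) x
           /\ V x.

Definition Wcls (i : I) : L -> Prop :=
  in_span (fun z => exists j, connected i j /\ z = e j).

Definition Jcls (i : I) : L -> Prop :=
  fun x => exists v w, Vcls i v /\ Wcls i w /\ x = v + w.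

End Defs.

Definition inherited_qmb (F : fieldType) (G : zmodType) (L : lmodType F)
    (I : eqType) (Lg : G -> L -> Prop) (V W : L -> Prop) (e : I -> L)
    (S : L -> Prop) :=
  exists (VS WS : L -> Prop) (P : I -> Prop),
    graded_subspace Lg VS /\ (forall x, VS x -> V x) /\
    graded_subspace Lg WS /\ (forall x, WS x -> W x) /\
    (exists x, WS x /\ x <> 0) /\
    (forall x, WS x <-> in_span (fun z => exists j, P j /\ z = e j) x) /\
    (forall x, S x <-> exists v w, VS v /\ WS w /\ x = v + w) /\
    (forall x, VS x -> WS x -> x = 0).

From Pilot Require Import Defs.
From HB Require Import structures.
From mathcomp Require Import all_boot all_fingroup all_algebra.
From Stdlib Require Import ClassicalEpsilon FunctionalExtensionality.
Set Implicit Arguments. Unset Strict Implicit. Unset Printing Implicit Defensive.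
Import GRing.Theory.
Local Open Scope ring_scope.

(* Each product of basis vectors lies either in V
   or on a line F e_r, and in the second case r is connected to the indices of
   the factors; hence V_[i] is spanned by homogeneous products with indices in
   [i], W_[i] by basis vectors, and J is graded.  For the ideal property,
   multilinearity reduces <z, x_2, ..., x_n> with z in J to the case where z is
   a basis vector e_j (j in [i]) or such a product, and every x_r is a basis
   vector or a homogeneous element of V.  If z = e_j, axioms (1) and (2) put the
   product on a line F e_r or, when all x_r are basis vectors, in V; the index
   maps a_sigma and b_sigma then connect r, resp. every x_r, to j.  If z is a
   product, the gLt identity rewrites <z, x_2, ..., x_n> as a combination of
   nested products whose inner product contains a basis vector from [i], and the
   first case applies twice. *)

Section Span.
Variables (F : fieldType) (L : lmodType F).
Implicit Types (S T : L -> Prop).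

Lemma mem_span S x : S x -> in_span S x.
Proof.
move=> Sx; exists [:: (1, x)]; split; last by rewrite big_seq1 scale1r.
by move=> p; rewrite inE => /eqP ->.
Qed.

Lemma sub_span S T : (forall x, S x -> T x) -> forall x, in_span S x -> in_span T x.
Proof. by move=> ST x [s [Hs ->]]; exists s; split => // p ps; apply: ST; apply: Hs. Qed.

Lemma span_subspace S : subspace (in_span S).
Proof.
split; first by exists [::]; rewrite big_nil.
move=> a x y [s [Hs ->]] [t [Ht ->]].
exists ([seq (a * p.1, p.2) | p <- s] ++ t); split.
  move=> p; rewrite mem_cat => /orP [/mapP [q qs ->]|]; [exact: Hs qs | exact: Ht].
rewrite big_cat big_map scaler_sumr; congr (_ + _).
by apply: eq_bigr => p _; rewrite scalerA.
Qed.

Lemma subspace0 S : subspace S -> S 0.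
Proof. by case. Qed.

Lemma subspaceD S x y : subspace S -> S x -> S y -> S (x + y).
Proof. by move=> [_ Sl] Sx Sy; have := Sl 1 x y Sx Sy; rewrite scale1r. Qed.

Lemma subspaceZ S a x : subspace S -> S x -> S (a *: x).
Proof. by move=> [S0 Sl] Sx; have := Sl a x 0 Sx S0; rewrite addr0. Qed.

Lemma subspaceB S x y : subspace S -> S x -> S y -> S (x - y).
Proof. by move=> [_ Sl] Sx Sy; have := Sl (-1) y x Sy Sx; rewrite scaleN1r addrC. Qed.

Lemma subspace_sum S (T : Type) (r : seq T) (P : pred T) (f : T -> L) :
  subspace S -> (forall t, P t -> S (f t)) -> S (\sum_(t <- r | P t) f t).
Proof. by move=> hS H; apply: big_ind => //; [case: hS | move=> x y; apply: subspaceD]. Qed.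

Lemma subspace_add S T : subspace S -> subspace T ->
  subspace (fun x => exists v w, S v /\ T w /\ x = v + w).
Proof.
move=> [S0 Sl] [T0 Tl]; split; first by exists 0, 0; rewrite addr0.
move=> a _ _ [v [w [Sv [Tw ->]]]] [v' [w' [Sv' [Tw' ->]]]].
exists (a *: v + v'), (a *: w + w').
by rewrite scalerDr addrACA; split; [apply: Sl | split; first apply: Tl].
Qed.

Lemma subspace_span S : subspace S -> forall x, in_span S x -> S x.
Proof.
move=> hS x [s [Hs ->]]; rewrite big_seq; apply: subspace_sum => // p ps.
by apply: subspaceZ => //; apply: Hs.
Qed.

Lemma subspaceI S T : subspace S -> subspace T -> subspace (fun x => S x /\ T x).
Proof.
move=> [S0 Sl] [T0 Tl]; split => // a x y [? ?] [? ?]; split; [exact: Sl | exact: Tl].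
Qed.

Lemma subspace_line (I : eqType) (e : I -> L) j : subspace (line e j).
Proof.
split; first by exists 0; rewrite scale0r.
by move=> a x y [c ->] [d ->]; exists (a * c + d); rewrite scalerDl scalerA.
Qed.

End Span.

Section Multilinear.
Variables (F : fieldType) (L : lmodType F) (n : nat) (mu : ('I_n -> L) -> L).
Hypothesis mu_ml : multilinear mu.

Definition upd (w : 'I_n -> L) (k : 'I_n) (u : L) := fun p => if p == k then u else w p.

Lemma upd_id w k : upd w k (w k) = w.
Proof. by apply: functional_extensionality => p; rewrite /upd; case: eqP => // ->. Qed.

Lemma multilinear_upd0 w k : mu (upd w k 0) = 0.
Proof.
have := mu_ml k w 1 0 0; rewrite scaler0 addr0 scale1r -/(upd w k 0) => h.
by apply: (@addrI _ (mu (upd w k 0))); rewrite addr0 -h.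
Qed.

Lemma multilinear_updZ w k a u : mu (upd w k (a *: u)) = a *: mu (upd w k u).
Proof. by have := mu_ml k w a u 0; rewrite addr0 multilinear_upd0 addr0. Qed.

Lemma multilinear_span_upd (P B : L -> Prop) w k :
  subspace P -> (forall u, B u -> P (mu (upd w k u))) ->
  forall u, in_span B u -> P (mu (upd w k u)).
Proof.
move=> [P0 Pl] H u [s [Hs ->]]; elim: s Hs => [|p s IH] Hs.
  by rewrite big_nil multilinear_upd0.
rewrite big_cons /upd mu_ml; apply: Pl.
  by apply: H; apply: Hs; rewrite inE eqxx.
by apply: IH => q qs; apply: Hs; rewrite inE qs orbT.
Qed.

(* Replace the arguments by spans one position at a time, from left to right. *)
Lemma multilinear_span (P : L -> Prop) (B : 'I_n -> L -> Prop) :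
  subspace P -> (forall w, (forall r, B r (w r)) -> P (mu w)) ->
  forall w, (forall r, in_span (B r) (w r)) -> P (mu w).
Proof.
move=> hP H.
suff: forall m, (m <= n)%N -> forall w,
    (forall r : 'I_n, (r < m)%N -> in_span (B r) (w r)) ->
    (forall r : 'I_n, (m <= r)%N -> B r (w r)) -> P (mu w).
  by move=> Hm w Hw; apply: (Hm n) => // r; rewrite leqNgt ltn_ord.
elim=> [|m IH] hm w Hlt Hge; first by apply: H => r; apply: Hge.
pose km : 'I_n := Ordinal hm.
rewrite -(upd_id w km); apply: multilinear_span_upd => //; last by apply: Hlt.
move=> u Bu; apply: IH; first exact: ltnW.
  move=> r hr; rewrite /upd; case: eqP => [E|_]; first by rewrite E /= ltnn in hr.
  by apply: Hlt; apply: ltnW.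
move=> r hr; rewrite /upd; case: eqP => [->|ne] //.
apply: Hge; rewrite ltn_neqAle hr andbT; apply/eqP => E; apply: ne; exact: val_inj.
Qed.

Lemma prodset_subspace (A : 'I_n -> L -> Prop) (s : 'S_n) (P : L -> Prop) :
  subspace P -> (forall x, (forall r, A r (x r)) -> P (mu (fun p => x (s p)))) ->
  forall z, prodset mu A s z -> P z.
Proof.
by move=> hP H z Hz; apply: subspace_span hP _ _; apply: sub_span Hz => y [x [Hx ->]]; apply: H.
Qed.

Lemma prodset_perm (A : 'I_n -> L -> Prop) (t : 'S_n) z :
  prodset mu A 1%g z <-> prodset mu (fun r => A (t r)) (t^-1)%g z.
Proof.
split; apply: sub_span => y [x [Hx ->]].
  exists (fun r => x (t r)); split => //.
  by congr mu; apply: functional_extensionality => p; rewrite perm1 permKV.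
exists (fun r => x ((t^-1)%g r)); split; first by move=> r; have := Hx ((t^-1)%g r); rewrite permKV.
by congr mu; apply: functional_extensionality => p; rewrite perm1.
Qed.

End Multilinear.

Lemma degree_choice (G : zmodType) (L : Type) (Lg : G -> L -> Prop) (T : Type) (x : T -> L) :
  (forall t, exists g, Lg g (x t)) -> exists g : T -> G, forall t, Lg (g t) (x t).
Proof. exact: ClassicalEpsilon.choice. Qed.

Lemma exists_perm_nth n (l : seq 'I_n) : uniq l -> size l = n ->
  exists s : 'S_n, forall p : 'I_n, s p = nth p l p.
Proof.
move=> ul sl.
have inj : injective (fun p : 'I_n => nth p l p).
  move=> p q /= E; apply: val_inj => /=; apply/eqP.
  have hp : (p < size l)%N by rewrite sl ltn_ord.
  have hq : (q < size l)%N by rewrite sl ltn_ord.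
  by rewrite -(nth_uniq p hp hq ul) E (set_nth_default p q hq).
by exists (perm inj) => p; rewrite permE.
Qed.
Section ArgumentFamilies.
Variable T : Type.

Lemma tup_insn_extn_lift n (k : 'I_n) (z d : T) (f : 'I_n -> T) :
  @tup n _ (insn k z (extn d (fun s => f (lift k s)))) =1 fun r => if r == k then z else f r.
Proof.
move=> r; rewrite /tup /insn /extn.
case: (ltnP r k) => Hrk.
  have -> : (r == k) = false by apply/eqP => E; rewrite E ltnn in Hrk.
  case: insubP => [s _ Hs|Hn].
    by congr f; apply: val_inj => /=; rewrite /bump Hs leqNgt Hrk.
  exfalso; move/negP: Hn; apply; rewrite -ltnS prednK; first exact: leq_ltn_trans Hrk (ltn_ord k).
  exact: leq_ltn_trans (leq0n _) (ltn_ord r).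
case: (eqVneq r k) => [->|ne]; first by rewrite !eqxx.
have ne' : (nat_of_ord r == k) = false by apply/negbTE.
rewrite ne'.
have Hlt : (k < r)%N by rewrite ltn_neqAle Hrk andbT eq_sym.
have h0 : (0 < r)%N by exact: leq_ltn_trans (leq0n _) Hlt.
have hn : (0 < n)%N by exact: leq_ltn_trans (leq0n _) (ltn_ord r).
case: insubP => [s _ Hs|Hn].
  congr f; apply: val_inj => /=; rewrite /bump Hs.
  have -> : (k <= r.-1)%N by rewrite -ltnS prednK.
  by rewrite add1n prednK.
exfalso; move/negP: Hn; apply; rewrite -ltnS !prednK //.
Qed.

Lemma tup_insn_deln_extn n (i : 'I_n) (z d : T) (f : 'I_n -> T) :
  @tup n _ (insn i z (deln i (extn d f))) =1 fun r => if r == i then z else f r.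
Proof.
move=> r; rewrite /tup /insn /deln /extn.
case: (ltnP r i) => Hri.
  have -> : (r == i) = false by apply/eqP => E; rewrite E ltnn in Hri.
  case: insubP => [s _ Hs|Hn]; first by congr f; apply: val_inj.
  by rewrite ltn_ord in Hn.
case: (eqVneq r i) => [->|ne]; first by rewrite !eqxx.
have ne' : (nat_of_ord r == i) = false by apply/negbTE.
rewrite ne'.
have Hlt : (i < r)%N by rewrite ltn_neqAle Hri andbT eq_sym.
have h0 : (0 < r)%N by exact: leq_ltn_trans (leq0n _) Hlt.
have -> : (r.-1 < i)%N = false by rewrite ltnNge -ltnS prednK // Hlt.
rewrite prednK //.
case: insubP => [s _ Hs|Hn]; first by congr f; apply: val_inj.
by rewrite ltn_ord in Hn.
Qed.

Lemma tup_insn_extn_other n (j : 'I_n) (z d : T) (g : 'I_(n.-1) -> T) (r : 'I_n) :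
  r != j -> exists s, @tup n _ (insn j z (extn d g)) r = g s.
Proof.
move=> ne; rewrite /tup /insn /extn.
have jn : (j < n)%N := ltn_ord j.
have rn : (r < n)%N := ltn_ord r.
case: (ltnP r j) => Hrj.
  case: insubP => [s _ Hs|Hn]; first by exists s.
  exfalso; move/negP: Hn; apply; rewrite -ltnS prednK; first exact: leq_ltn_trans Hrj jn.
  exact: leq_ltn_trans (leq0n _) rn.
have -> : (nat_of_ord r == j) = false by apply/negbTE.
have Hlt : (j < r)%N by rewrite ltn_neqAle Hrj andbT eq_sym.
have h0 : (0 < r)%N by exact: leq_ltn_trans (leq0n _) Hlt.
case: insubP => [s _ Hs|Hn]; first by exists s.
exfalso; move/negP: Hn; apply; rewrite -ltnS !prednK //.
exact: leq_ltn_trans (leq0n _) rn.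
Qed.

Lemma tup_ncons_lift0 n (o0 : 'I_n) (h0 : val o0 = 0%N) (d a : T) (f : 'I_n -> T) :
  a = f o0 -> @tup n _ (Defs.ncons a (extn d (fun t => f (lift o0 t)))) =1 f.
Proof.
move=> -> r; rewrite /tup /Defs.ncons /extn.
case E: (nat_of_ord r) => [|r'].
  by congr f; apply: val_inj; rewrite /= h0 E.
case: insubP => [s _ Hs|Hn].
  by congr f; apply: val_inj => /=; rewrite /bump h0 Hs E.
exfalso; move/negP: Hn; apply; have := ltn_ord r; rewrite E.
by case: (n) => //= m; rewrite ltnS.
Qed.

Lemma tup_ncons2_lift0 n (o0 o1 : 'I_n) (h0 : val o0 = 0%N) (h1 : val o1 = 1%N)
   (kk : 'I_(n.-1)) (hk : val kk = 0%N) (d d' a b : T) (f : 'I_n -> T) :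
  a = f o0 -> b = f o1 ->
  @tup n _ (Defs.ncons a (Defs.ncons b (deln kk (extn d
      (fun t => if t == kk then d' else f (lift o0 t)))))) =1 f.
Proof.
move=> -> -> r; rewrite /tup /Defs.ncons /deln /extn.
case E: (nat_of_ord r) => [|[|r']].
- by congr f; apply: val_inj; rewrite /= h0 E.
- by congr f; apply: val_inj; rewrite /= h1 E.
rewrite hk /=.
case: insubP => [s _ Hs|Hn].
  have -> : (s == kk) = false by apply/eqP => Es; move: Hs; rewrite Es hk.
  by congr f; apply: val_inj => /=; rewrite /bump h0 Hs E.
exfalso; move/negP: Hn; apply; have := ltn_ord r; rewrite E.
by case: (n) => //= m; rewrite ltnS.
Qed.

End ArgumentFamilies.

Section ConnectedClass.
Variables (F : fieldType) (G : zmodType) (L : lmodType F) (n : nat)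
  (eps : G -> G -> F) (Lg : G -> L -> Prop) (mu : ('I_n -> L) -> L) (I : eqType)
  (V W : L -> Prop) (e : I -> L) (i0 : I).
Hypothesis n_ge2 : (2 <= n)%N.
Hypothesis Lg_subspace : forall g, subspace (Lg g).
Hypothesis mu_ml : multilinear mu.
Hypothesis mu_graded : graded_product Lg mu.
Hypothesis mu_gLt : color_gLt Lg eps mu.
Hypothesis qmb : quasi_mult_basis Lg mu V W e.

Let V_graded : graded_subspace Lg V. Proof. by case: qmb. Qed.
Let V_subspace : subspace V. Proof. by case: V_graded. Qed.
Let L_decomp : forall x, exists v w, V v /\ W w /\ x = v + w.
Proof. by case: qmb => _ [_ []]. Qed.
Let VW_trivial : forall x, V x -> W x -> x = 0.
Proof. by case: qmb => _ [_ [_ []]]. Qed.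
Let e_homogeneous : forall j, homogeneous Lg (e j).
Proof. by case: qmb => _ [_ [_ [_ [_ []]]]]. Qed.
Let W_span : forall x, W x <-> in_span (fun z => exists j, z = e j) x.
Proof. by case: qmb => _ [_ [_ [_ [_ [_ []]]]]]. Qed.
Let e_free : forall s : seq I, uniq s -> forall c : I -> F,
  \sum_(j <- s) c j *: e j = 0 -> forall j, j \in s -> c j = 0.
Proof. by case: qmb => _ [_ [_ [_ [_ [_ [_ []]]]]]]. Qed.
Let prod_basis : forall ix : 'I_n -> I,
  (exists j, line e j (mu (e \o ix))) \/ V (mu (e \o ix)).
Proof. by case: qmb => _ [_ [_ [_ [_ [_ [_ [_ []]]]]]]]. Qed.
Let prod_mixed : forall k : nat, (0 < k < n)%N -> forall (ix : 'I_n -> I) (s : 'S_n),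
  exists j, forall z,
    prodset mu (fun r => if (r < k)%N then (fun z => z = e (ix r)) else V) s z -> line e j z.
Proof. by case: qmb => _ [_ [_ [_ [_ [_ [_ [_ [_ []]]]]]]]]. Qed.

Let Cn j := connected mu V e i0 j.
Let J := Jcls mu V e i0.
Let o0 : 'I_n := @Ordinal n 0 (leq_trans (isT : (0 < 2)%N) n_ge2).
Let o1 : 'I_n := @Ordinal n 1 n_ge2.
Let kk : 'I_(n.-1) := @Ordinal n.-1 0 (ltac:(by rewrite ltn_predRL)).

Lemma line_in_W r z : line e r z -> W z.
Proof.
by move=> [c ->]; apply/W_span; apply: subspaceZ (span_subspace _) _; apply: mem_span; exists r.
Qed.

Lemma basis_neq0 j : e j != 0.
Proof.
apply/eqP => E; have := @e_free [:: j] isT (fun _ => 1%R).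
by rewrite big_seq1 scale1r E => /(_ erefl j (mem_head _ _)) /eqP; rewrite oner_eq0.
Qed.

Definition uprod (js : 'I_n -> option I) (s : 'S_n) := prodset mu (fun r => uset V e (js r)) s.

Definition labelled (w : 'I_n -> L) (js : 'I_n -> option I) := forall r, uset V e (js r) (w r).

Lemma uprod_mem w js : labelled w js -> uprod js 1 (mu w).
Proof.
move=> lab; apply: mem_span; exists w; split => //; congr mu.
by apply: functional_extensionality => p; rewrite perm1.
Qed.

Lemma uprod_perm js (t : 'S_n) z : uprod js 1 z <-> uprod (fun r => js (t r)) (t^-1)%g z.
Proof. exact: prodset_perm. Qed.

Lemma uprod_basis_cases js ix : (forall r, js r = Some (ix r)) ->
  (exists r, forall z, uprod js 1 z -> line e r z) \/ (forall z, uprod js 1 z -> V z).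
Proof.
move=> js_ix.
have uprod_e P : subspace P -> P (mu (e \o ix)) -> forall z, uprod js 1 z -> P z.
  move=> hP Pe; apply: prodset_subspace hP _ => x Hx.
  suff -> : (fun p => x ((1%g : 'S_n) p)) = e \o ix by [].
  by apply: functional_extensionality => p; rewrite perm1 /=; have := Hx p; rewrite js_ix.
case: (prod_basis ix) => [[j Hj]|HV].
  by left; exists j; apply: uprod_e (subspace_line e j) Hj.
by right; apply: uprod_e V_subspace HV.
Qed.

(* Axiom (2), after a permutation moving the basis-vector arguments to the front. *)
Lemma uprod_mixed_line js r1 r2 m : js r1 = None -> js r2 = Some m ->
  exists r, forall z, uprod js 1 z -> line e r z.
Proof.
move=> h1 h2.
pose P := fun p : 'I_n => js p != None.
pose l1 := [seq p <- enum 'I_n | P p].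
pose l2 := [seq p <- enum 'I_n | predC P p].
have pl : perm_eq (l1 ++ l2) (enum 'I_n) by rewrite perm_filterC perm_refl.
have ul : uniq (l1 ++ l2) by rewrite (perm_uniq pl) enum_uniq.
have sl : size (l1 ++ l2) = n by rewrite (perm_size pl) size_enum_ord.
have hsz : (size l1 + size l2)%N = n by rewrite -size_cat.
have [s Hs] := exists_perm_nth ul sl.
have r2l1 : r2 \in l1 by rewrite mem_filter /P h2 mem_enum.
have r1l2 : r1 \in l2 by rewrite mem_filter /= /P h1 mem_enum.
have k0 : (0 < size l1)%N by rewrite -has_predT; apply/hasP; exists r2.
have kn : (size l1 < n)%N.
  by rewrite -[n in (_ < n)%N]hsz -{1}(addn0 (size l1)) ltn_add2l; case: (l2) r1l2.
pose ix := fun r => odflt m (js (s r)).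
have EA : (fun r => uset V e (js (s r))) =
          (fun r : 'I_n => if (r < size l1)%N then (fun z => z = e (ix r)) else V).
  apply: functional_extensionality => r; rewrite /ix Hs nth_cat.
  case: ltnP => hr.
  - have : nth r l1 r \in l1 by apply: mem_nth.
    by rewrite mem_filter /P => /andP [hs _]; case: (js (nth r l1 r)) hs.
  - have : nth r l2 (r - size l1) \in l2.
      by apply: mem_nth; rewrite -(ltn_add2l (size l1)) subnKC // hsz.
    by rewrite mem_filter /= /P negbK => /andP [/eqP -> _].
have [j Hj] := prod_mixed (k := size l1) (ltac:(by rewrite k0 kn)) ix (s^-1)%g.
by exists j => z /(uprod_perm js s) Hz; apply: Hj; rewrite -EA.
Qed.

Lemma connected_step m b X r : Cn m -> muI mu V e (b, Some m) X (Some r) -> Cn r.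
Proof.
rewrite /Cn /connected => Cm Hmu.
case: (eqVneq i0 r) => [->|ne]; first by left.
right; split; first exact/eqP.
case: Cm => [Em|[_ [b0 [Xs [hs [hmid hlast]]]]]].
  exists b, [:: X]; split => //; split; first by case=> [|[]].
  by exists (b, i0); rewrite Em.
exists b0, (rcons Xs X); split; first by rewrite size_rcons.
split.
  move=> m' /andP [h1 h2]; rewrite size_rcons ltnS leq_eqVlt in h2.
  rewrite -cats1; case/orP: h2 => [/eqP ->|h2].
    by rewrite takel_cat // take_size; exists (false, m).
  by rewrite takel_cat ?(ltnW h2) //; apply: hmid; rewrite h1.
rewrite /phis foldl_rcons; exists (b, m); split => //.
(* phi never looks at the bar of its output, so (false, m) may become (b, m). *)
move: hlast hs; rewrite /phis; case/lastP: Xs {hmid} => [|Xs' X'] //.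
by rewrite !foldl_rcons.
Qed.

(* r lies in a_s(m, ...) for a suitable s, i.e. in mu(m, X). *)
Lemma connected_of_line w js k m r : labelled w js -> js k = Some m -> Cn m ->
  mu w != 0 -> (forall z, uprod js 1 z -> line e r z) -> Cn r.
Proof.
move=> lab js_k Cm nz Hr.
pose p := tperm o0 k.
apply: (@connected_step m false (false, fun t => js (p (lift o0 t)))) => //.
rewrite /muI /=; exists (p^-1)%g.
have -> : tup (Defs.ncons (Some m) (extn None (fun t => js (p (lift o0 t)))))
          = (fun r => js (p r)).
  by apply: functional_extensionality; apply: tup_ncons_lift0 => //; rewrite /p tpermL.
split.
  by exists (mu w); split; [apply/(uprod_perm js p)/uprod_mem | apply/eqP].
by move=> z /(uprod_perm js p) /Hr.
Qed.

(* m' lies in b_s(v, bar m, ...) for a suitable s, i.e. in mu(bar m, X). *)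
Lemma connected_of_V w js k m r0 m' : labelled w js -> js k = Some m -> Cn m ->
  mu w != 0 -> (forall z, uprod js 1 z -> V z) -> r0 != k -> js r0 = Some m' -> Cn m'.
Proof.
move=> lab js_k Cm nz HV ne js_r0.
pose l := r0 :: k :: [seq p <- enum 'I_n | (p != r0) && (p != k)].
have ul : uniq l.
  rewrite /l /= !inE !mem_filter (negbTE ne) !eqxx /= !andbF /=.
  by rewrite filter_uniq // enum_uniq.
have sl : size l = n.
  have pl : perm_eq l (enum 'I_n).
    apply: uniq_perm => //; first exact: enum_uniq.
    move=> p; rewrite mem_enum /l !inE mem_filter mem_enum andbT.
    by case: (p == r0); case: (p == k).
  by rewrite (perm_size pl) size_enum_ord.
have [s Hs] := exists_perm_nth ul sl.
pose X2 := fun t => if t == kk then None else js (s (lift o0 t)).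
apply: (@connected_step m true (false, X2)) => //.
rewrite /muI /=; exists kk, (s^-1)%g.
have E : tup (Defs.ncons (Some m') (Defs.ncons (Some m) (deln kk (extn None X2))))
          = (fun r => js (s r)).
  by apply: functional_extensionality; apply: (@tup_ncons2_lift0 _ n o0 o1); rewrite ?Hs.
have mu_w_s : uprod (fun r => js (s r)) (s^-1)%g (mu w).
  exact/(uprod_perm js s)/uprod_mem.
move=> t; rewrite E /X2 eqxx; split.
  case=> [_ Ht]; case: t Ht => [r|] // Ht; exfalso; move/eqP: nz; apply.
  by apply: VW_trivial (HV _ (uprod_mem lab)) (line_in_W (Ht _ mu_w_s)).
move=> ->; split; first by exists (mu w); split => //; apply/eqP.
by move=> z /(uprod_perm js s) /HV.
Qed.

Definition basis_or_V z := (exists m, z = e m) \/ V z.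

Definition connected_prod z := exists ix : 'I_n -> I, (forall r, Cn (ix r)) /\ z = mu (e \o ix).

Lemma prod_basis_vector_cases w k j : Cn j -> w k = e j -> (forall r, basis_or_V (w r)) ->
  (exists r c, Cn r /\ mu w = c *: e r) \/ (V (mu w) /\ connected_prod (mu w)).
Proof.
move=> Cj wk wgen.
have [js Hjs] : exists js : 'I_n -> option I,
    forall r, uset V e (js r) (w r) /\ (r = k -> js r = Some j).
  apply: (ClassicalEpsilon.choice (fun r o => uset V e o (w r) /\ (r = k -> o = Some j))) => r.
  case: (eqVneq r k) => [->|ne]; first by exists (Some j).
  by case: (wgen r) => [[m' ->]|wV]; [exists (Some m') | exists None]; split => // E;
    rewrite E eqxx in ne.
have lab : labelled w js by move=> r; case: (Hjs r).
have js_k : js k = Some j by case: (Hjs k) => _ ->.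
have [->|nz] := eqVneq (mu w) 0; first by left; exists j, 0; rewrite scale0r.
have line_case r : (forall z, uprod js 1 z -> line e r z) ->
    exists r c, Cn r /\ mu w = c *: e r.
  move=> Hr; have [c Hc] := Hr _ (uprod_mem lab).
  by exists r, c; split => //; apply: connected_of_line lab js_k Cj nz Hr.
case: (pickP (fun r => js r == None)) => [r1 /eqP js_r1|all_basis].
  by left; have [r Hr] := uprod_mixed_line js_r1 js_k; apply: line_case Hr.
pose ix r := odflt j (js r).
have js_ix r : js r = Some (ix r) by move: (all_basis r); rewrite /ix; case: (js r).
case: (uprod_basis_cases js_ix) => [[r Hr]|HV]; first by left; apply: line_case Hr.
right; split; first exact: HV _ (uprod_mem lab).
exists ix; split.
  move=> r; case: (eqVneq r k) => [->|ne]; first by move: (js_ix k); rewrite js_k => -[<-].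
  exact: connected_of_V lab js_k Cj nz HV ne (js_ix r).
by congr mu; apply: functional_extensionality => p; move: (lab p); rewrite js_ix => ->.
Qed.

Lemma Vcls_subspace : subspace (Vcls mu V e i0).
Proof. exact: subspaceI (span_subspace _) V_subspace. Qed.

Lemma Wcls_subspace : subspace (Wcls mu V e i0).
Proof. exact: span_subspace. Qed.

Lemma J_subspace : subspace J.
Proof. exact: subspace_add Vcls_subspace Wcls_subspace. Qed.

Lemma Vcls_J z : Vcls mu V e i0 z -> J z.
Proof.
by move=> h; exists z, 0; rewrite addr0; do 2!split => //; apply: subspace0 Wcls_subspace.
Qed.

Lemma Wcls_J z : Wcls mu V e i0 z -> J z.
Proof. by move=> h; exists 0, z; rewrite add0r; split => //; apply: subspace0 Vcls_subspace. Qed.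

Lemma line_J r c : Cn r -> J (c *: e r).
Proof.
by move=> Cr; apply: Wcls_J; apply: subspaceZ Wcls_subspace _; apply: mem_span; exists r.
Qed.

Lemma connected_prod_J z : V z -> connected_prod z -> J z.
Proof.
move=> hV [ix [Cix E]]; rewrite E in hV *.
by apply: Vcls_J; split => //; apply: mem_span; exists ix.
Qed.

Lemma J_prod_basis_vector w k j : Cn j -> w k = e j -> (forall r, basis_or_V (w r)) ->
  J (mu w).
Proof.
move=> Cj wk wgen; case: (prod_basis_vector_cases Cj wk wgen) => [[r [c [Cr ->]]]|[]].
  exact: line_J.
exact: connected_prod_J.
Qed.

(* Classify the product through another argument, which exists because n >= 2. *)
Lemma J_prod_V_arg w k : V (w k) -> (forall r, r != k -> exists m, Cn m /\ w r = e m) ->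
  J (mu w).
Proof.
move=> wV HB.
pose r0 := if k == o0 then o1 else o0.
have r0k : r0 != k.
  by rewrite /r0; case: (eqVneq k o0) => [->|]; [rewrite -val_eqE | rewrite eq_sym].
have [m [Cm wr0]] := HB r0 r0k.
apply: (J_prod_basis_vector Cm wr0) => r.
case: (eqVneq r k) => [->|rk]; first by right.
by have [m' [_ ->]] := HB r rk; left; exists m'.
Qed.

Lemma J_upd_connected_basis ix k u : (forall r, Cn (ix r)) ->
  (exists r c, Cn r /\ u = c *: e r) \/ V u -> J (mu (upd (e \o ix) k u)).
Proof.
move=> Cix [[r [c [Cr ->]]]|uV].
  rewrite multilinear_updZ //; apply: subspaceZ J_subspace _.
  apply: (J_prod_basis_vector (k := k) Cr); first by rewrite /upd eqxx.
  by move=> r'; rewrite /upd; case: eqP => _; left; [exists r | exists (ix r')].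
apply: (J_prod_V_arg (k := k)); first by rewrite /upd eqxx.
by move=> r' ne; exists (ix r'); rewrite /upd (negbTE ne).
Qed.

Lemma J_gLt_term (ix : 'I_n -> I) (y : 'I_(n.-1) -> L) (i j : 'I_n) (s1 : 'S_n)
    (s2 : 'S_(n.-1)) :
  (forall r, Cn (ix r)) -> (forall s, basis_or_V (y s)) ->
  J (mu (tup (insn i (mu (tup (insn j ((e \o ix) (s1 i)) (extn 0 (y \o s2)))))
                   (deln i (extn 0 ((e \o ix) \o s1)))))).
Proof.
move=> Cix ygen.
set inner := mu (tup (insn j _ _)).
have -> : tup (insn i inner (deln i (extn 0 ((e \o ix) \o s1)))) = upd (e \o (ix \o s1)) i inner.
  by apply: functional_extensionality => r; rewrite tup_insn_deln_extn.
have inner_j : tup (insn j ((e \o ix) (s1 i)) (extn 0 (y \o s2))) j = e (ix (s1 i)).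
  by rewrite /tup /insn ltnn eqxx.
apply: J_upd_connected_basis => [r|]; first exact: Cix.
case: (prod_basis_vector_cases (Cix (s1 i)) inner_j) => [r|inner_line|[inner_V _]].
- case: (eqVneq r j) => [->|ne]; first by left; exists (ix (s1 i)).
  by have [s ->] := tup_insn_extn_other ((e \o ix) (s1 i)) 0 (y \o s2) ne; apply: ygen.
- by left.
- by right.
Qed.

Definition hom_basis_or_V z := basis_or_V z /\ homogeneous Lg z.

Lemma J_prod_connected_prod w k ix : (forall r, Cn (ix r)) -> w k = mu (e \o ix) ->
  (forall r, r != k -> hom_basis_or_V (w r)) -> J (mu w).
Proof.
move=> Cix wk wgen.
have [alpha gLt_id] := mu_gLt.
have [gx Hgx] := degree_choice (fun r => e_homogeneous (ix r)).
pose y s := w (lift k s).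
have ygen s : hom_basis_or_V (y s) by apply: wgen; rewrite eq_sym neq_lift.
have [gy Hgy] := degree_choice (fun s => (ygen s).2).
have -> : mu w = mu (tup (insn k (mu (e \o ix)) (extn 0 y))).
  congr mu; apply: functional_extensionality => r; rewrite tup_insn_extn_lift.
  by case: (eqVneq r k) => [->|].
have E := gLt_id k gx gy (e \o ix) y Hgx Hgy; cbv zeta in E; rewrite E.
do 4!(apply: subspace_sum J_subspace _ => ? _).
by apply: subspaceZ J_subspace _; apply: J_gLt_term => // s; case: (ygen s).
Qed.

Definition J_generator z := (exists j, Cn j /\ z = e j) \/ connected_prod z.

Lemma J_prod_J_generator w k : J_generator (w k) ->
  (forall r, r != k -> hom_basis_or_V (w r)) -> J (mu w).
Proof.
move=> [[j [Cj wk]]|[ix [Cix wk]]] wgen; last exact: J_prod_connected_prod Cix wk wgen.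
apply: (J_prod_basis_vector Cj wk) => r.
by case: (eqVneq r k) => [->|rk]; [left; exists j | exact: (wgen r rk).1].
Qed.

Lemma span_hom_basis_or_V z : in_span hom_basis_or_V z.
Proof.
have [v [w [vV [wW ->]]]] := L_decomp z.
apply: subspaceD (span_subspace _) _ _.
  case: V_graded => _ /(_ v vV) [s [Hs ->]].
  exists [seq (1, p.2) | p <- s]; split.
    move=> _ /mapP [q qs ->] /=; have [Lq Vq] := Hs q qs.
    by split; [right | exists q.1].
  by rewrite big_map; apply: eq_bigr => p _; rewrite scale1r.
move/W_span: wW; apply: sub_span => _ [m ->].
by split; [left; exists m | apply: e_homogeneous].
Qed.

Lemma J_span_generators z : J z -> in_span J_generator z.
Proof.
move=> [v [w [[vspan _] [wspan ->]]]]; apply: subspaceD (span_subspace _) _ _.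
  by apply: sub_span vspan => _ [ix [Cix ->]]; right; exists ix.
by apply: sub_span wspan => _ [j [Cj ->]]; left; exists j.
Qed.

Lemma J_prod w k : J (w k) -> J (mu w).
Proof.
move=> Jwk.
apply: (multilinear_span mu_ml (B := fun r => if r == k then J_generator else hom_basis_or_V)).
- exact: J_subspace.
- move=> w' Hw'; apply: (@J_prod_J_generator _ k); first by have := Hw' k; rewrite eqxx.
  by move=> r ne; have := Hw' r; rewrite (negbTE ne).
- move=> r; case: (eqVneq r k) => [->|_]; [exact: J_span_generators | exact: span_hom_basis_or_V].
Qed.

Lemma J_prodset (s : 'S_n) z :
  prodset mu (fun r => if nat_of_ord r == 0%N then J else (fun _ => True)) s z -> J z.
Proof.
move=> Hz; apply: (prodset_subspace J_subspace _ Hz) => x Hx.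
by apply: (@J_prod _ ((s^-1)%g o0)); rewrite permKV; apply: Hx o0.
Qed.

(* Each connected product is either a multiple of some e_r with r in [i], which
   goes to the W-part, or a homogeneous element of V_[i]. *)
Lemma connected_prods_split (s : seq (F * L)) : (forall p, p \in s -> connected_prod p.2) ->
  exists (s1 : seq (G * L)) w,
    (forall q, q \in s1 -> Lg q.1 q.2 /\ Vcls mu V e i0 q.2) /\ Wcls mu V e i0 w /\
    \sum_(p <- s) p.1 *: p.2 = \sum_(q <- s1) q.2 + w.
Proof.
elim: s => [|p s IH] Hs.
  by exists [::], 0; rewrite !big_nil addr0; do 2!split => //; apply: subspace0 Wcls_subspace.
have [s1 [w [Hs1 [Hw E]]]] := IH (fun q qs => Hs q (@mem_behead _ (p :: s) q qs)).
have [ix [Cix Ep]] := Hs p (mem_head _ _).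
have [gx Hgx] := degree_choice (fun r => e_homogeneous (ix r)).
have ix_gen r : basis_or_V ((e \o ix) r) by left; exists (ix r).
case: (@prod_basis_vector_cases (e \o ix) o0 (ix o0) (Cix _) erefl ix_gen).
  move=> [r [c [Cr Ec]]]; exists s1, (p.1 *: (c *: e r) + w); split => //; split.
    apply: subspaceD Wcls_subspace _ Hw; apply: subspaceZ Wcls_subspace _.
    by apply: subspaceZ Wcls_subspace _; apply: mem_span; exists r.
  by rewrite big_cons E Ep Ec addrCA.
move=> [pV _]; exists ((\sum_r gx r, p.1 *: p.2) :: s1), w; split.
  move=> q; rewrite inE => /orP [/eqP -> /=|qs]; last exact: Hs1.
  rewrite Ep; split; first by apply: subspaceZ (Lg_subspace _) _; apply: mu_graded.
  split; last exact: subspaceZ V_subspace pV.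
  by apply: subspaceZ (span_subspace _) _; apply: mem_span; exists ix.
by split => //; rewrite !big_cons /= E addrA.
Qed.

Lemma Vcls_graded : graded_subspace Lg (Vcls mu V e i0).
Proof.
split; first exact: Vcls_subspace.
move=> x [[s [Hs Ex]] xV].
have [s1 [w [Hs1 [Hw E]]]] := connected_prods_split Hs.
have s1V : V (\sum_(q <- s1) q.2).
  by rewrite big_seq; apply: subspace_sum V_subspace _ => q /Hs1 [_ []].
suff w0 : w = 0 by exists s1; split => //; rewrite Ex E w0 addr0.
apply: VW_trivial.
  have -> : w = x - \sum_(q <- s1) q.2 by rewrite Ex E addrC addKr.
  exact: subspaceB V_subspace xV s1V.
by apply/W_span; apply: sub_span Hw => _ [j [_ ->]]; exists j.
Qed.

Lemma Wcls_graded : graded_subspace Lg (Wcls mu V e i0).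
Proof.
split; first exact: Wcls_subspace.
move=> _ [s [Hs ->]]; elim: s Hs => [|p s IH] Hs; first by exists [::]; rewrite !big_nil.
have [s1 [Hs1 E]] := IH (fun q qs => Hs q (@mem_behead _ (p :: s) q qs)).
have [j [Cj Ep]] := Hs p (mem_head _ _).
have [g Hg] := e_homogeneous j.
exists ((g, p.1 *: p.2) :: s1); split; last by rewrite !big_cons E.
move=> q; rewrite inE => /orP [/eqP -> /=|qs]; last exact: Hs1.
rewrite Ep; split; first exact: subspaceZ.
by apply: subspaceZ (span_subspace _) _; apply: mem_span; exists j.
Qed.

Lemma Jcls_gLt_ideal : gLt_ideal Lg mu J.
Proof.
split; last exact: J_prodset.
split; first exact: J_subspace.
move=> _ [v [w [vV [wW ->]]]].
have [[_ Vdec] [_ Wdec]] := (Vcls_graded, Wcls_graded).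
have [s1 [Hs1 ->]] := Vdec v vV; have [s2 [Hs2 ->]] := Wdec w wW.
exists (s1 ++ s2); split; last by rewrite big_cat.
move=> q; rewrite mem_cat => /orP [/Hs1|/Hs2] [Lq Sq]; split => //; [exact: Vcls_J | exact: Wcls_J].
Qed.

Lemma Jcls_inherited_qmb : inherited_qmb Lg V W e J.
Proof.
have Wcls_W x : Wcls mu V e i0 x -> W x.
  by move=> Hx; apply/W_span; apply: sub_span Hx => _ [j [_ ->]]; exists j.
exists (Vcls mu V e i0), (Wcls mu V e i0), Cn.
split; first exact: Vcls_graded.
split; first by move=> x [].
split; first exact: Wcls_graded.
split; first exact: Wcls_W.
split.
  exists (e i0); split; last exact/eqP/basis_neq0.
  by apply: mem_span; exists i0; split => //; left.
do 2!split => //.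
by move=> x [_ xV] /Wcls_W; apply: VW_trivial.
Qed.

End ConnectedClass.

Theorem proposition3p8 (F : fieldType) (G : zmodType) (L : lmodType F) (n : nat)
    (eps : G -> G -> F) (Lg : G -> L -> Prop) (mu : ('I_n -> L) -> L)
    (I : eqType) (V W : L -> Prop) (e : I -> L) :
  (2 <= n)%N ->
  bicharacter eps ->
  grading Lg ->
  multilinear mu ->
  graded_product Lg mu ->
  color_gLt Lg eps mu ->
  quasi_mult_basis Lg mu V W e ->
  forall i : I,
    gLt_ideal Lg mu (Jcls mu V e i) /\ inherited_qmb Lg V W e (Jcls mu V e i).
Proof.
move=> n_ge2 _ [Lg_subspace _] mu_ml mu_graded mu_gLt qmb i.
split; first exact: Jcls_gLt_ideal n_ge2 Lg_subspace mu_ml mu_graded mu_gLt qmb.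
exact: Jcls_inherited_qmb.
Qed.
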